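(* Let $T$ be an Aronszajn tree. Then $\diamondsuit$ implies $\lnot\sigma\mathsf{U}_T$; that is, there is a ladder system coloring which is not $\sigma$-$T$-uniformizable.
   Context: A ladder system is $\vec l=\langle l_\alpha:\alpha\in\omega_1\cap\mathrm{Lim}\rangle$ with each $l_\alpha\subseteq\alpha$ cofinal in $\alpha$ of order type $\omega$; $l_{\alpha,n}$ is its $n$-th element. A ladder system coloring is $\langle\vec l,\vec c\rangle$ with $\vec c=\langle c_\alpha:l_\alpha\to\omega\rangle$. For a tree $T$ of height $\omega_1$, $T_\alpha$ is its $\alpha$-th level, $T\restriction\mathrm{Lim}=\bigcup_{\alpha\in\mathrm{Lim}}T_\alpha$, and $t\restriction\gamma$ is the predecessor of $t$ on level $\gamma$. $\langle\vec l,\vec c\rangle$ is $\sigma$-$T$-uniformizable if there are a decomposition $T\restriction\mathrm{Lim}=\bigcup_{n<\omega}A_n$ and $f:T\restriction\mathrm{Lim}\to\omega$ such that for each $n$ the set $\{\langle t\restriction l_{\alpha,k},c_\alpha(l_{\alpha,k})\rangle:\alpha\in\mathrm{Lim},\ t\in A_n\cap T_\alpha,\ k\ge f(t)\}$ is a function. *)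

(* omega_1 is modelled abstractly as a type W with a strict
   relation lt characterising it up to isomorphism: a well-order whose proper
   initial segments are all countable while W itself is uncountable. *)
From Stdlib Require Import Arith.

Section Omega1.
Variables (W : Type) (lt : W -> W -> Prop).

Definition countable_set {X : Type} (S : X -> Prop) : Prop :=
  (forall x, ~ S x) \/ exists f : nat -> X, forall x, S x -> exists n, f n = x.

Definition is_omega1 : Prop :=
  (forall a, ~ lt a a) /\
  (forall a b c, lt a b -> lt b c -> lt a c) /\
  (forall a b, lt a b \/ a = b \/ lt b a) /\
  well_founded lt /\
  (forall a, countable_set (fun b => lt b a)) /\
  ~ countable_set (fun _ : W => True).

Definition is_limit (a : W) : Prop :=
  (exists b, lt b a) /\ forall b, lt b a -> exists c, lt b c /\ lt c a.

Definition unbounded (C : W -> Prop) : Prop :=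
  forall b, exists c, lt b c /\ C c.

Definition closed (C : W -> Prop) : Prop :=
  forall a, is_limit a ->
    (forall b, lt b a -> exists c, lt b c /\ lt c a /\ C c) -> C a.

Definition club (C : W -> Prop) : Prop := unbounded C /\ closed C.

Definition stationary (S : W -> Prop) : Prop :=
  forall C, club C -> exists a, C a /\ S a.

Definition diamond : Prop :=
  exists A : W -> W -> Prop,
    (forall a b, A a b -> lt b a) /\
    forall X : W -> Prop,
      stationary (fun a => forall b, lt b a -> (X b <-> A a b)).

(* A ladder system: l a n is the n-th element of l_a, for limit a; l_a is
   then the range of the strictly increasing, cofinal sequence l a. *)
Definition ladder_system (l : W -> nat -> W) : Prop :=
  forall a, is_limit a ->
    (forall n, lt (l a n) a) /\
    (forall n m, n < m -> lt (l a n) (l a m)) /\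
    (forall b, lt b a -> exists n, lt b (l a n)).

(* Trees of height omega_1: nodes N, strict order tlt, height ht.  The
   predecessors of t are mapped by ht isomorphically onto ht t. *)
Definition tree_of_height_omega1 (N : Type) (tlt : N -> N -> Prop)
    (ht : N -> W) : Prop :=
  (forall t, ~ tlt t t) /\
  (forall s t u, tlt s t -> tlt t u -> tlt s u) /\
  (forall s t, tlt s t -> lt (ht s) (ht t)) /\
  (forall t g, lt g (ht t) -> exists s, tlt s t /\ ht s = g) /\
  (forall s s' t, tlt s t -> tlt s' t -> ht s = ht s' -> s = s') /\
  (forall a, exists t, ht t = a).

Definition aronszajn_tree (N : Type) (tlt : N -> N -> Prop)
    (ht : N -> W) : Prop :=
  tree_of_height_omega1 N tlt ht /\
  (forall a, countable_set (fun t => ht t = a)) /\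
  ~ (exists b : W -> N,
       (forall a, ht (b a) = a) /\ (forall a a', lt a a' -> tlt (b a) (b a'))).

(* restr t g s  <->  s = t|g, the predecessor (or t itself) of t on level g *)
Definition restr (N : Type) (tlt : N -> N -> Prop) (ht : N -> W)
    (t : N) (g : W) (s : N) : Prop :=
  (s = t /\ ht t = g) \/ (tlt s t /\ ht s = g).

(* c a k is the colour c_a(l_{a,k}).  sigma-T-uniformizability: *)
Definition sigma_T_uniformizable (N : Type) (tlt : N -> N -> Prop)
    (ht : N -> W) (l : W -> nat -> W) (c : W -> nat -> nat) : Prop :=
  exists (A : nat -> N -> Prop) (f : N -> nat),
    (forall t, is_limit (ht t) -> exists n, A n t) /\
    (forall n t, A n t -> is_limit (ht t)) /\
    forall n t t' k k' s,
      A n t -> A n t' -> f t <= k -> f t' <= k' ->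
      restr N tlt ht t (l (ht t) k) s ->
      restr N tlt ht t' (l (ht t') k') s ->
      c (ht t) k = c (ht t') k'.

End Omega1.

(* Fix a diamond sequence (D_a) and injections (n, s, v) |-> xi(n, s, v) into
   omega_1 sending nodes below a limit level a below a.  Define the colouring in
   advance: when k encodes a node t of the limit level a and an index n, let
   c_a(l_{a,k}) be one more than some v with xi(n, t|l_{a,k}, v) in D_a.
   Given a uniformization (A_n, f), diamond guesses at some limit a the set of
   codes xi(n, s, v) such that v is the colour forced on s by some node of A_n
   above s.  Take t of level a in A_n and k encoding (t, n, f(t)), so k >= f(t):
   then s = t|l_{a,k} is forced to have both the colour c_a(l_{a,k}) and the
   guessed value, which differ by one. *)
From Stdlib Require Import Lia ClassicalEpsilon.
From Stdlib.Arith Require Cantor.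

Lemma cantor_to_nat_inj (p q : nat * nat) :
  Cantor.to_nat p = Cantor.to_nat q -> p = q.
Proof.
  intros E. rewrite <- (Cantor.cancel_of_to p), <- (Cantor.cancel_of_to q), E.
  reflexivity.
Qed.

Section LevelIndex.
Context {W N : Type} (ht : N -> W).
Hypothesis levels_countable : forall a, countable_set (fun t => ht t = a).

Lemma level_index :
  exists idx : N -> nat, forall t t', ht t = ht t' -> idx t = idx t' -> t = t'.
Proof.
  destruct (choice (fun a (e : nat -> option N) =>
              forall t, ht t = a -> exists i, e i = Some t)) as [e He].
  { intros a. destruct (levels_countable a) as [Hempty | [g Hg]].
    - exists (fun _ => None). intros t Ht. now destruct (Hempty t).
    - exists (fun i => Some (g i)). intros t Ht.
      destruct (Hg t Ht) as [i <-]. now exists i. }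
  destruct (choice (fun t i => e (ht t) i = Some t)) as [idx Hidx].
  { intros t. exact (He _ t eq_refl). }
  exists idx. intros t t' Eht Eidx.
  assert (E : Some t = Some t') by now rewrite <- Hidx, <- Hidx, Eht, Eidx.
  now injection E.
Qed.

End LevelIndex.

Section Omega1.
Context {W : Type} (lt : W -> W -> Prop).
Hypothesis Hom : is_omega1 W lt.

Lemma omega1_lt_trans a b c : lt a b -> lt b c -> lt a c.
Proof. destruct Hom as (_ & H & _). exact (H a b c). Qed.

Lemma omega1_lt_total a b : lt a b \/ a = b \/ lt b a.
Proof. destruct Hom as (_ & _ & H & _). exact (H a b). Qed.

Lemma omega1_wf : well_founded lt.
Proof. destruct Hom as (_ & _ & _ & H & _). exact H. Qed.

Lemma omega1_uncountable : ~ countable_set (fun _ : W => True).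
Proof. destruct Hom as (_ & _ & _ & _ & _ & H). exact H. Qed.

Lemma exists_lt_minimal (P : W -> Prop) :
  (exists x, P x) -> exists x, P x /\ forall y, P y -> ~ lt y x.
Proof.
  intros [x Px]. apply NNPP. intros Hnone. revert Px.
  induction x as [x IH] using (well_founded_ind omega1_wf). intros Px.
  apply Hnone. exists x. split; [exact Px |]. intros y Py Hyx. exact (IH y Hyx Py).
Qed.

Lemma le_countable (b : W) :
  exists h : nat -> W, forall y, y = b \/ lt y b -> exists i, h i = y.
Proof.
  destruct Hom as (_ & _ & _ & _ & Hcnt & _).
  destruct (Hcnt b) as [Hempty | [f Hf]].
  - exists (fun _ => b). intros y [-> | Hy]; [now exists 0 | now destruct (Hempty y)].
  - exists (fun n => match n with 0 => b | S n => f n end). intros y [-> | Hy].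
    + now exists 0.
    + destruct (Hf y Hy) as [n Hn]. now exists (S n).
Qed.

Lemma exists_gt (x : W) : exists y, lt x y.
Proof.
  apply NNPP. intros Hmax. apply omega1_uncountable.
  destruct (le_countable x) as [h Hh]. right. exists h. intros y _. apply Hh.
  destruct (omega1_lt_total y x) as [Hy | [Hy | Hy]]; auto. exfalso. eauto.
Qed.

Lemma successor_exists :
  exists s : W -> W, forall x, lt x (s x) /\ forall z, lt x z -> ~ lt z (s x).
Proof.
  apply (choice (fun x y => lt x y /\ forall z, lt x z -> ~ lt z y)). intros x.
  destruct (exists_lt_minimal (lt x) (exists_gt x)) as [y [Hxy Hmin]].
  exists y. split; [exact Hxy |]. intros z Hxz Hzy. exact (Hmin z Hxz Hzy).
Qed.

Lemma limit_directed a x y :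
  is_limit W lt a -> lt x a -> lt y a -> exists z, lt x z /\ lt y z /\ lt z a.
Proof.
  intros [_ Hlim] Hx Hy.
  destruct (omega1_lt_total x y) as [Hxy | [<- | Hyx]].
  - destruct (Hlim y Hy) as [z [Hyz Hza]]. exists z. eauto using omega1_lt_trans.
  - destruct (Hlim x Hx) as [z [Hxz Hza]]. now exists z.
  - destruct (Hlim x Hx) as [z [Hxz Hza]]. exists z. eauto using omega1_lt_trans.
Qed.

Definition limit_or_zero (x : W) : Prop :=
  is_limit W lt x \/ forall b, ~ lt b x.

Section Successor.
Variable s : W -> W.
Hypothesis s_spec : forall x, lt x (s x) /\ forall z, lt x z -> ~ lt z (s x).

Lemma succ_not_limit_or_zero x : ~ limit_or_zero (s x).
Proof.
  destruct (s_spec x) as [Hx Hleast]. intros [[_ Hlim] | Hzero].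
  - destruct (Hlim x Hx) as [z [Hxz Hzs]]. exact (Hleast z Hxz Hzs).
  - exact (Hzero x Hx).
Qed.

Lemma succ_inj x y : s x = s y -> x = y.
Proof.
  intros E. destruct (omega1_lt_total x y) as [Hxy | [Exy | Hyx]]; [exfalso | exact Exy | exfalso].
  - apply (proj2 (s_spec x) y Hxy). rewrite E. apply s_spec.
  - apply (proj2 (s_spec y) x Hyx). rewrite <- E. apply s_spec.
Qed.

Lemma iter_succ_le x p : Nat.iter p s x = x \/ lt x (Nat.iter p s x).
Proof.
  induction p as [| p [E | IH]]; simpl; auto; right.
  - rewrite E at 1. apply s_spec.
  - exact (omega1_lt_trans _ _ _ IH (proj1 (s_spec _))).
Qed.

Lemma iter_succ_lt_limit a x p :
  is_limit W lt a -> lt x a -> lt (Nat.iter p s x) a.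
Proof.
  intros Ha Hx. induction p as [| p IH]; simpl; [exact Hx |].
  destruct (proj2 Ha _ IH) as [c [Hc Hca]].
  destruct (omega1_lt_total (s (Nat.iter p s x)) c) as [Hsc | [-> | Hcs]].
  - exact (omega1_lt_trans _ _ _ Hsc Hca).
  - exact Hca.
  - exfalso. exact (proj2 (s_spec _) c Hc Hcs).
Qed.

Lemma limit_decomposition b :
  exists l k, limit_or_zero l /\ b = Nat.iter k s l.
Proof.
  induction b as [b IH] using (well_founded_ind omega1_wf).
  destruct (classic (limit_or_zero b)) as [Hb | Hb]; [now exists b, 0 |].
  assert (Hpred : exists c, lt c b /\ forall z, lt c z -> ~ lt z b).
  { apply NNPP. intros Hno. apply Hb. left. split.
    - apply NNPP. intros Hnone. apply Hb. right. intros c Hc. eauto.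
    - intros c Hc. apply NNPP. intros Hgap. apply Hno. exists c. split; [exact Hc |].
      intros z Hcz Hzb. eauto. }
  destruct Hpred as [c [Hcb Hgap]].
  assert (Eb : b = s c).
  { destruct (omega1_lt_total (s c) b) as [Hsb | [E | Hbs]].
    - exfalso. exact (Hgap _ (proj1 (s_spec c)) Hsb).
    - now symmetry.
    - exfalso. exact (proj2 (s_spec c) b Hcb Hbs). }
  destruct (IH c Hcb) as [l [k [Hl ->]]]. now exists l, (S k).
Qed.

Lemma limit_decomposition_unique l1 l2 k1 k2 :
  limit_or_zero l1 -> limit_or_zero l2 ->
  Nat.iter k1 s l1 = Nat.iter k2 s l2 -> l1 = l2 /\ k1 = k2.
Proof.
  revert k2. induction k1 as [| k1 IH]; intros [| k2] Hl1 Hl2 E; simpl in E.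
  - auto.
  - exfalso. apply (succ_not_limit_or_zero (Nat.iter k2 s l2)). now rewrite <- E.
  - exfalso. apply (succ_not_limit_or_zero (Nat.iter k1 s l1)). now rewrite E.
  - destruct (IH k2 Hl1 Hl2 (succ_inj _ _ E)) as [-> ->]. auto.
Qed.

(* Otherwise every ordinal would be [s^k(l)] with [l <= b]: countably many. *)
Lemma limits_unbounded : unbounded W lt (is_limit W lt).
Proof.
  intros b. apply NNPP. intros Hno. apply omega1_uncountable.
  destruct (le_countable b) as [h Hh]. right.
  exists (fun m => Nat.iter (snd (Cantor.of_nat m)) s (h (fst (Cantor.of_nat m)))).
  intros y _. destruct (limit_decomposition y) as [l [k [Hl ->]]].
  assert (Hlb : l = b \/ lt l b).
  { destruct (omega1_lt_total l b) as [E | [E | E]]; auto. exfalso.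
    destruct Hl as [Hl | Hl]; [apply Hno; eauto | exact (Hl b E)]. }
  destruct (Hh l Hlb) as [i Hi]. exists (Cantor.to_nat (i, k)).
  rewrite Cantor.cancel_of_to. simpl. now rewrite Hi.
Qed.

End Successor.

Lemma limits_club : club W lt (is_limit W lt).
Proof.
  destruct successor_exists as [s Hs]. split.
  - exact (limits_unbounded s Hs).
  - intros a Ha _. exact Ha.
Qed.

(* [code b j] runs through the successors of the last limit below [b]. *)
Lemma limit_closed_coding :
  exists code : W -> nat -> W,
    (forall b b' j j', code b j = code b' j' -> b = b' /\ j = j') /\
    (forall a b j, is_limit W lt a -> lt b a -> lt (code b j) a).
Proof.
  destruct successor_exists as [s Hs].
  destruct (choice (fun b p => limit_or_zero (fst p) /\ b = Nat.iter (snd p) s (fst p)))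
    as [dec Hdec].
  { intros b. destruct (limit_decomposition s Hs b) as [l [k H]]. now exists (l, k). }
  exists (fun b j => Nat.iter (Cantor.to_nat (snd (dec b), j)) s (fst (dec b))). split.
  - intros b b' j j' E.
    destruct (Hdec b) as [Hl Eb], (Hdec b') as [Hl' Eb'].
    destruct (limit_decomposition_unique s Hs _ _ _ _ Hl Hl' E) as [El Ek].
    apply cantor_to_nat_inj, pair_equal_spec in Ek as [Ek Ej].
    split; [| exact Ej]. now rewrite Eb, Eb', El, Ek.
  - intros a b j Ha Hb. apply (iter_succ_lt_limit s Hs); [exact Ha |].
    destruct (Hdec b) as [_ Eb].
    destruct (iter_succ_le s Hs (fst (dec b)) (snd (dec b))) as [E | E];
      rewrite <- Eb in E; [now rewrite <- E | exact (omega1_lt_trans _ _ _ E Hb)].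
Qed.

Fixpoint ladder_from (up : W -> W -> W) (x0 : W) (f : nat -> W) (n : nat) : W :=
  up (match n with 0 => x0 | S m => ladder_from up x0 f m end) (f n).

Lemma ladder_at_limit a :
  exists la : nat -> W, is_limit W lt a ->
    (forall n, lt (la n) a) /\ (forall n m, n < m -> lt (la n) (la m)) /\
    (forall b, lt b a -> exists n, lt b (la n)).
Proof.
  destruct (classic (is_limit W lt a)) as [Ha | Ha]; [| exists (fun _ => a); tauto].
  destruct Hom as (_ & _ & _ & _ & Hcnt & _).
  pose proof Ha as [[x0 Hx0] Hlim].
  destruct (Hcnt a) as [Hempty | [f Hf]]; [now destruct (Hempty x0) |].
  destruct (choice (fun x up => forall y, lt x a ->
                 lt x (up y) /\ lt (up y) a /\ (lt y a -> lt y (up y)))) as [up Hup].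
  { intros x. apply (choice (fun y z => lt x a -> lt x z /\ lt z a /\ (lt y a -> lt y z))).
    intros y.
    destruct (classic (lt x a)) as [Hx | Hx]; [| exists x; tauto].
    destruct (classic (lt y a)) as [Hy | Hy].
    - destruct (limit_directed a x y Ha Hx Hy) as [z Hz]. exists z. tauto.
    - destruct (Hlim x Hx) as [z Hz]. exists z. tauto. }
  set (la := ladder_from up x0 f).
  assert (Hbelow : forall n, lt (la n) a).
  { intros n. induction n as [| n IH]; apply Hup; assumption. }
  assert (Hprev : forall n, lt (la n) (la (S n))) by (intros n; apply Hup, Hbelow).
  exists la. intros _. repeat split.
  - exact Hbelow.
  - intros n m Hnm. induction Hnm; eauto using omega1_lt_trans.
  - intros b Hb. destruct (Hf b Hb) as [n <-]. exists n.
    destruct n as [| n]; apply Hup; [exact Hx0 | exact Hb | apply Hbelow | exact Hb].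
Qed.

Lemma ladder_system_exists : exists l, ladder_system W lt l.
Proof. exact (choice _ ladder_at_limit). Qed.

Section CountableLevels.
Context {N : Type} (ht : N -> W).
Hypothesis levels_countable : forall a, countable_set (fun t => ht t = a).

Lemma node_coding :
  exists xi : nat -> N -> nat -> W,
    (forall n t v n' t' v', xi n t v = xi n' t' v' -> n = n' /\ t = t' /\ v = v') /\
    (forall a n t v, is_limit W lt a -> lt (ht t) a -> lt (xi n t v) a).
Proof.
  destruct limit_closed_coding as [code [Hinj Hlt]].
  destruct (level_index ht levels_countable) as [idx Hidx].
  exists (fun n t v => code (ht t) (Cantor.to_nat (idx t, Cantor.to_nat (n, v)))).
  split; [| auto].
  intros n t v n' t' v' E. apply Hinj in E as [Eht E].
  apply cantor_to_nat_inj, pair_equal_spec in E as [Eidx E].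
  apply cantor_to_nat_inj, pair_equal_spec in E as [-> ->].
  auto.
Qed.

End CountableLevels.

End Omega1.

Section Diamond.
Context {W : Type} (lt : W -> W -> Prop) {N : Type} (tlt : N -> N -> Prop) (ht : N -> W).
Hypothesis tree_pred : forall t g, lt g (ht t) -> exists s, tlt s t /\ ht s = g.
Hypothesis levels_nonempty : forall a, exists t, ht t = a.
Variable D : W -> W -> Prop.
Hypothesis D_guesses : forall X : W -> Prop,
  stationary W lt (fun a => forall b, lt b a -> (X b <-> D a b)).
Hypothesis limit_club : club W lt (is_limit W lt).
Variable l : W -> nat -> W.
Hypothesis l_ladder : ladder_system W lt l.
Variable xi : nat -> N -> nat -> W.
Hypothesis xi_inj :
  forall n t v n' t' v', xi n t v = xi n' t' v' -> n = n' /\ t = t' /\ v = v'.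
Hypothesis xi_lt : forall a n t v, is_limit W lt a -> lt (ht t) a -> lt (xi n t v) a.
Variable idx : N -> nat.
Hypothesis idx_inj : forall t t', ht t = ht t' -> idx t = idx t' -> t = t'.

Lemma restr_ht t g s : restr W N tlt ht t g s -> ht s = g.
Proof. intros [[-> E] | [_ E]]; exact E. Qed.

Definition below (t : N) (g : W) : N := epsilon (inhabits t) (restr W N tlt ht t g).

Lemma below_restr t g : lt g (ht t) -> restr W N tlt ht t g (below t g).
Proof.
  intros Hg. unfold below. apply epsilon_spec.
  destruct (tree_pred t g Hg) as [s Hs]. exists s. now right.
Qed.

Definition guess (a : W) (k v : nat) : Prop :=
  exists t n j, ht t = a /\ k = Cantor.to_nat (Cantor.to_nat (idx t, n), j) /\
    D a (xi n (below t (l a k)) v).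

Definition color (a : W) (k : nat) : nat := S (epsilon (inhabits 0) (guess a k)).

Lemma guess_node a k v t n j :
  guess a k v -> ht t = a -> k = Cantor.to_nat (Cantor.to_nat (idx t, n), j) ->
  D a (xi n (below t (l a k)) v).
Proof.
  intros (t' & n' & j' & Ht' & Ek' & HD) Ht Ek. rewrite Ek' in Ek.
  apply cantor_to_nat_inj, pair_equal_spec in Ek as [Ek _].
  apply cantor_to_nat_inj, pair_equal_spec in Ek as [Eidx ->].
  rewrite (idx_inj t' t) in HD by congruence. exact HD.
Qed.

Lemma color_not_uniformizable : ~ sigma_T_uniformizable W lt N tlt ht l color.
Proof.
  intros (A & f & A_cover & _ & A_uniform).
  set (uniformized := fun n s v => exists t k, A n t /\ f t <= k /\
         restr W N tlt ht t (l (ht t) k) s /\ color (ht t) k = v).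
  set (X := fun b => exists n s v, b = xi n s v /\ uniformized n s v).
  destruct (D_guesses X (is_limit W lt) limit_club) as [a [Ha HX]].
  destruct (levels_nonempty a) as [t Ht].
  destruct (A_cover t) as [n Hn]; [now rewrite Ht |].
  set (k := Cantor.to_nat (Cantor.to_nat (idx t, n), f t)).
  assert (Hfk : f t <= k).
  { pose proof (Cantor.to_nat_non_decreasing (Cantor.to_nat (idx t, n)) (f t)). lia. }
  set (s := below t (l a k)).
  assert (Hs : restr W N tlt ht t (l (ht t) k) s).
  { rewrite Ht. apply below_restr. rewrite Ht. apply l_ladder, Ha. }
  assert (Hxi : forall v, lt (xi n s v) a).
  { intros v. apply xi_lt; [exact Ha |].
    rewrite (restr_ht _ _ _ Hs), Ht. apply l_ladder, Ha. }
  set (v := epsilon (inhabits 0) (guess a k)).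
  assert (Hguess : guess a k v).
  { apply epsilon_spec. exists (S v), t, n, (f t). repeat split; [exact Ht |].
    apply HX; [apply Hxi |]. exists n, s, (S v). split; [reflexivity |].
    exists t, k. rewrite Ht in *. repeat split; assumption. }
  assert (Huni : uniformized n s v).
  { assert (HXv : X (xi n s v)).
    { apply HX; [apply Hxi |]. exact (guess_node a k v t n (f t) Hguess Ht eq_refl). }
    destruct HXv as (n' & s' & v' & E & Hu). apply xi_inj in E as (-> & -> & ->). exact Hu. }
  destruct Huni as (t' & k' & Hn' & Hfk' & Hs' & Hcol').
  pose proof (A_uniform n t t' k k' s Hn Hn' Hfk Hfk' Hs Hs') as Hcol.
  rewrite Hcol', Ht in Hcol. unfold color in Hcol. fold v in Hcol. lia.
Qed.

End Diamond.

Theorem lemma4 (W : Type) (lt : W -> W -> Prop) (N : Type)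
    (tlt : N -> N -> Prop) (ht : N -> W) :
  is_omega1 W lt ->
  aronszajn_tree W lt N tlt ht ->
  diamond W lt ->
  exists (l : W -> nat -> W) (c : W -> nat -> nat),
    ladder_system W lt l /\ ~ sigma_T_uniformizable W lt N tlt ht l c.
Proof.
  intros Hom [(_ & _ & _ & Hpred & _ & Hsurj) [Hlevels _]] [D [_ HD]].
  destruct (ladder_system_exists lt Hom) as [l Hl].
  destruct (node_coding lt Hom ht Hlevels) as [xi [Hxi_inj Hxi_lt]].
  destruct (level_index ht Hlevels) as [idx Hidx].
  exists l, (color tlt ht D l xi idx). split; [exact Hl |].
  exact (color_not_uniformizable lt tlt ht Hpred Hsurj D HD
           (limits_club lt Hom) l Hl xi Hxi_inj Hxi_lt idx Hidx).
Qed.
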